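(* Let $t$ be a term and $\vec x=x_1\dots x_n$ a vector of pairwise distinct program variables. If for every $\vec v\in\mathbb{Z}^n$, $$\vec x(1)=\vec x(2)\wedge\vec x(3)=\vec v\ \vdash\ \mathrm{wp}\,[1:t,2:t,3:t]\,\{\vec x(2)=\vec v\Rightarrow\vec x(1)=\vec x(3)\},$$ then for every $\vec v\in\mathbb{Z}^n$, $$\vec x(2)=\vec v\ \vdash\ \mathrm{wp}\,[1:t,2:t]\,\{\vec x(1)=\vec v\Rightarrow\vec x(2)=\vec v\}.$$
   Context: Setting. $\mathrm{Val}=\mathbb{Z}$; $\mathrm{PVar}$ is a countably infinite set of program variables; a store is a function $s:\mathrm{PVar}\to\mathrm{Val}$; indices are $\mathrm{Idx}=\mathbb{N}$. Terms of a first-order imperative language are generated by $t ::= v \mid x \mid * \mid t\oplus t \mid \mathtt{skip}\mid x:=t \mid t;t \mid \mathtt{if}\ t\ \mathtt{then}\ t\ \mathtt{else}\ t \mid \mathtt{while}\ t\ \mathtt{do}\ t$, with a nondeterministic big-step semantics $t,s\Downarrow v,s'$ ($t$ run from $s$ may terminate with return value $v$ and final store $s'$; $*$ returns an arbitrary integer). A hyper-term is a finitely supported partial map from $\mathrm{Idx}$ to terms, written $[i_1:t_1,\dots,i_n:t_n]$; a hyper-store is a total function $\mathbf s:\mathrm{Idx}\to\mathrm{Store}$. $\mathbf t,\mathbf s\Downarrow\mathbf v,\mathbf s'$ holds iff for every $i\in\mathrm{supp}(\mathbf t)$, $\mathbf t(i),\mathbf s(i)\Downarrow\mathbf v(i),\mathbf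 s'(i)$, and for every $i\notin\mathrm{supp}(\mathbf t)$, $\mathbf s'(i)=\mathbf s(i)$. A hyper-assertion is a predicate on hyper-stores; connectives are pointwise; $P\vdash R$ means $\forall\mathbf s.\ P(\mathbf s)\Rightarrow R(\mathbf s)$. $\mathrm{wp}\,\mathbf t\,\{Q\}(\mathbf s):\iff\forall\mathbf v,\mathbf s'.\ (\mathbf t,\mathbf s\Downarrow\mathbf v,\mathbf s')\Rightarrow Q(\mathbf s')$ for a hyper-assertion $Q$. $\vec x(i)=\vec v$ is the hyper-assertion $\forall k.\ \mathbf s(i)(x_k)=v_k$, and $\vec x(i)=\vec x(j)$ is $\forall k.\ \mathbf s(i)(x_k)=\mathbf s(j)(x_k)$. *)

From Stdlib Require Import ZArith List.
Import ListNotations.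
Open Scope Z_scope.

Definition Val := Z.
Definition PVar := nat.
Definition Store := PVar -> Val.
Definition Idx := nat.

Inductive term : Type :=
| TVal : Val -> term
| TVar : PVar -> term
| TStar : term
| TBin : (Val -> Val -> Val) -> term -> term -> term
| TSkip : term
| TAssign : PVar -> term -> term
| TSeq : term -> term -> term
| TIf : term -> term -> term -> term
| TWhile : term -> term -> term.

Definition upd (s : Store) (x : PVar) (v : Val) : Store :=
  fun y => if Nat.eqb y x then v else s y.

(* Nondeterministic big-step semantics: t, s ⇓ v, s' *)
Inductive bigstep : term -> Store -> Val -> Store -> Prop :=
| BS_Val : forall v s, bigstep (TVal v) s v s
| BS_Var : forall x s, bigstep (TVar x) s (s x) s
| BS_Star : forall v s, bigstep TStar s v s
| BS_Bin : forall op t1 t2 s s1 s2 v1 v2,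
    bigstep t1 s v1 s1 -> bigstep t2 s1 v2 s2 ->
    bigstep (TBin op t1 t2) s (op v1 v2) s2
| BS_Skip : forall s, bigstep TSkip s 0 s
| BS_Assign : forall x t s v s1,
    bigstep t s v s1 -> bigstep (TAssign x t) s v (upd s1 x v)
| BS_Seq : forall t1 t2 s s1 s2 v1 v2,
    bigstep t1 s v1 s1 -> bigstep t2 s1 v2 s2 -> bigstep (TSeq t1 t2) s v2 s2
| BS_IfT : forall c t1 t2 s s1 vc v s2,
    bigstep c s vc s1 -> vc <> 0 -> bigstep t1 s1 v s2 -> bigstep (TIf c t1 t2) s v s2
| BS_IfF : forall c t1 t2 s s1 v s2,
    bigstep c s 0 s1 -> bigstep t2 s1 v s2 -> bigstep (TIf c t1 t2) s v s2
| BS_WhileT : forall c b s s1 vc vb s2 v s3,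
    bigstep c s vc s1 -> vc <> 0 -> bigstep b s1 vb s2 ->
    bigstep (TWhile c b) s2 v s3 -> bigstep (TWhile c b) s v s3
| BS_WhileF : forall c b s s1,
    bigstep c s 0 s1 -> bigstep (TWhile c b) s 0 s1.

(* Hyper-terms: partial maps Idx -> term (the ones used below are finitely supported). *)
Definition hterm := Idx -> option term.
Definition hstore := Idx -> Store.
Definition hval := Idx -> Val.
Definition hassert := hstore -> Prop.

Definition hbigstep (ht : hterm) (hs : hstore) (hv : hval) (hs' : hstore) : Prop :=
  forall i, match ht i with
            | Some t => bigstep t (hs i) (hv i) (hs' i)
            | None => hs' i = hs i
            end.

Definition wp (ht : hterm) (Q : hassert) : hassert :=
  fun hs => forall hv hs', hbigstep ht hs hv hs' -> Q hs'.

Definition entails (P R : hassert) : Prop := forall hs, P hs -> R hs.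

Definition hterm2 (t : term) : hterm :=
  fun i => match i with 1%nat | 2%nat => Some t | _ => None end.
Definition hterm3 (t : term) : hterm :=
  fun i => match i with 1%nat | 2%nat | 3%nat => Some t | _ => None end.

Definition vec_eq_val (xs : list PVar) (i : Idx) (vs : list Val) : hassert :=
  fun hs => Forall2 (fun x v => hs i x = v) xs vs.
Definition vec_eq_idx (xs : list PVar) (i j : Idx) : hassert :=
  fun hs => Forall (fun x => hs i x = hs j x) xs.

From Stdlib Require Import ZArith List.

(* Take a run of the 2-copy hyper-term [1:t,2:t] from a
   hyper-store whose copy 2 starts at v⃗.  Re-index it as a run of the
   3-copy hyper-term [1:t,2:t,3:t] in which copies 1 and 2 are both the
   original copy 1 and copy 3 is the original copy 2 (the reindexing
   [dup1] below).  In the re-indexed initial store x⃗(1) = x⃗(2) holds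
   trivially and x⃗(3) = v⃗ holds by assumption, so the hypothesis gives,
   at the end, x⃗(2) = v⃗ ⇒ x⃗(1) = x⃗(3).  Read back through the
   reindexing, this says: if the final copy 1 has x⃗ = v⃗, then the final
   copy 1 and the final copy 2 agree on x⃗, hence the final copy 2 has
   x⃗ = v⃗ as well. *)

Lemma vec_values_transport (a b : Store) (xs : list PVar) (vs : list Val) :
  Forall (fun x => a x = b x) xs ->
  Forall2 (fun x v => a x = v) xs vs ->
  Forall2 (fun x v => b x = v) xs vs.
Proof.
  intros Hab Hvals; induction Hvals as [|x v xs' vs' Hxv _ IH]; constructor.
  - inversion Hab; congruence.
  - inversion Hab; auto.
Qed.

Lemma vec_eq_idx_refl (xs : list PVar) (i : Idx) (hs : hstore) :
  vec_eq_idx xs i i hs.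
Proof. apply Forall_forall; reflexivity. Qed.

(* The reindexing 1 ↦ 1, 2 ↦ 1, 3 ↦ 2 (other indices fixed): turns a
   2-copy family into a 3-copy family whose first two copies coincide. *)
Definition dup1 {A : Type} (h : Idx -> A) : Idx -> A :=
  fun i => match i with
           | 1%nat | 2%nat => h 1%nat
           | 3%nat => h 2%nat
           | _ => h i
           end.

Lemma hbigstep_dup1 (t : term) (hs : hstore) (hv : hval) (hs' : hstore) :
  hbigstep (hterm2 t) hs hv hs' ->
  hbigstep (hterm3 t) (dup1 hs) (dup1 hv) (dup1 hs').
Proof.
  intros Hrun i.
  destruct i as [|[|[|[|j]]]]; cbn; [exact (Hrun 0%nat) | exact (Hrun 1%nat)
  | exact (Hrun 1%nat) | exact (Hrun 2%nat) | exact (Hrun (S (S (S (S j)))))].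
Qed.

Theorem mainTheorem17 (t : term) (xs : list PVar) :
  NoDup xs ->
  (forall vs : list Val, length vs = length xs ->
     entails (fun hs => vec_eq_idx xs 1%nat 2%nat hs /\ vec_eq_val xs 3%nat vs hs)
             (wp (hterm3 t) (fun hs => vec_eq_val xs 2%nat vs hs -> vec_eq_idx xs 1%nat 3%nat hs))) ->
  forall vs : list Val, length vs = length xs ->
    entails (vec_eq_val xs 2%nat vs)
            (wp (hterm2 t) (fun hs => vec_eq_val xs 1%nat vs hs -> vec_eq_val xs 2%nat vs hs)).
Proof.
  intros _ Hyp vs Hlen hs Hstart hv hs' Hrun Hend1.
  assert (Hpre : vec_eq_idx xs 1%nat 2%nat (dup1 hs) /\ vec_eq_val xs 3%nat vs (dup1 hs))
    by exact (conj (vec_eq_idx_refl xs 1%nat hs) Hstart).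
  assert (Hagree : Forall (fun x => hs' 1%nat x = hs' 2%nat x) xs)
    by exact (Hyp vs Hlen (dup1 hs) Hpre (dup1 hv) (dup1 hs')
                  (hbigstep_dup1 t hs hv hs' Hrun) Hend1).
  exact (vec_values_transport _ _ xs vs Hagree Hend1).
Qed.
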